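(* Let $(K,C,S)$ be a layered simplicial complex and let $(K,C,S)\searrow(K-\{f,p\},C-\{f,p\},S)$ be an elementary $C$-collapse of a principal simplex $p\in C$ using the free face $f\in C$ of $p$. Then the freely orthogonal deformation retraction $H:|K|\times I\to|K|$ associated to $p$ and $f$ satisfies $H_t(|K|-|S|)\subseteq|K|-|S|$ and $H_t(|S|)=|S|$ for all $t\in I$.
   Context: A simplicial complex is a set of finite nonempty sets (simplices) closed under passing to nonempty subsets (faces); $|K|$ is its geometric realization and $|s|$ the closed geometric simplex. A simplex is principal in $K$ if it is not a proper face of any simplex of $K$; $f$ is free in $K$ if it is a proper face of a principal simplex $p$ and of no other simplex of $K$. A layered simplicial complex is $(K,C,S)$ with $C,S$ disjoint subcomplexes of $K$. An elementary $C$-collapse uses $p\in C$ principal in $K$ and a face $f$ of $p$ free in $K$. Freely orthogonal deformation retraction: let $p$ be principal in $K$ with free face $f$, let $v$ be the vertex of $p$ not in $f$ and $f_1,\dots,f_m$ the vertices of $f$ ($m\ge1$). Identify $|p|$ via barycentric coordinates with $\{x\in\mathbb R^m: x_i\ge0,\ \sum x_i\le1\}$ ($v\mapsto0$, $f_i\mapsto e_i$). Define $r:|p|\to|p|$ by $r(x)=(x_1-x_j,\dots,x_m-x_j)$ where $x_j=\min\{x_1,\dots,x_m\}$, and $H:|K|\times I\to|K|$ by $H(x,t)=(1-t)x+t\,r(x)$ for $x\in|p|$ and $H(x,t)=x$ for $x\in|K|-|p|$; $H_t=H(\cdot,t)$. *)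

From mathcomp Require Import all_boot all_order all_algebra.
Set Implicit Arguments. Unset Strict Implicit. Unset Printing Implicit Defensive.
Import Order.TTheory GRing.Theory Num.Theory.
Local Open Scope ring_scope.

Section Simplicial.
Variable V : finType.

Definition is_complex (K : {set {set V}}) : Prop :=
  (forall s : {set V}, s \in K -> s != set0) /\
  (forall s t : {set V}, s \in K -> t \subset s -> t != set0 -> t \in K).

Definition subcomplex (L K : {set {set V}}) : Prop :=
  is_complex L /\ L \subset K.

Definition layered (K C S : {set {set V}}) : Prop :=
  [/\ is_complex K, subcomplex C K, subcomplex S K & [disjoint C & S]].

Definition principal (K : {set {set V}}) (p : {set V}) : Prop :=
  p \in K /\ (forall s : {set V}, s \in K -> ~~ (p \proper s)).

Definition free_face (K : {set {set V}}) (f p : {set V}) : Prop :=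
  [/\ principal K p, f \in K, f \proper p &
      (forall s : {set V}, s \in K -> f \proper s -> s = p)].

Definition elementary_C_collapse (K C : {set {set V}}) (p f : {set V}) : Prop :=
  [/\ p \in C, f \in C, principal K p & free_face K f p].

Variable R : realFieldType.

(** Points of |K| are given by barycentric coordinates x : V -> R.
    x lies in the closed geometric simplex |s|. *)
Definition in_simplex (s : {set V}) (x : V -> R) : bool :=
  [&& [forall u, 0 <= x u], \sum_u x u == 1 &
      [forall u, (u \notin s) ==> (x u == 0)]].

Definition realization (K : {set {set V}}) (x : V -> R) : Prop :=
  exists2 s, s \in K & in_simplex s x.

(** The retraction r of |p| (p = f ∪ {v}) in barycentric coordinates:
    r(x)_{f_i} = x_{f_i} - min_j x_{f_j}, and the v-coordinate is
    1 - sum_i r(x)_{f_i} = x_v + m * min_j x_{f_j}, m = #|f|.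
    (The min is taken with initial value 1, which is harmless as all
    coordinates of a point of |p| are <= 1 and f is nonempty.) *)
Definition fo_retract (f : {set V}) (v : V) (x : V -> R) : V -> R :=
  let mu := \big[Num.min/1]_(u in f) x u in
  fun u => if u \in f then x u - mu
           else if u == v then x v + #|f|%:R * mu else x u.

Definition fo_homotopy (p f : {set V}) (v : V) (x : V -> R) (t : R) : V -> R :=
  if in_simplex p x then (fun u => (1 - t) * x u + t * fo_retract f v x u)
  else x.

End Simplicial.

From mathcomp Require Import all_boot all_order all_algebra.
From mathcomp Require Import ring.
Set Implicit Arguments. Unset Strict Implicit. Unset Printing Implicit Defensive.
Import Order.TTheory GRing.Theory Num.Theory.
Local Open Scope ring_scope.

(* The set of nonzero barycentric coordinates of a point of |s| is a nonempty
   face of s.  For a point of |p| this face lies in C (C is a subcomplex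
   containing p), so it is not in S, and |p| misses |S|.  Hence H, which moves
   only points of |p|, fixes |S| pointwise; and it keeps |p| inside |p| since
   r maps |p| to itself and |p| is convex. *)

Section FreelyOrthogonalRetraction.
Variables (R : realFieldType) (V : finType).
Implicit Types (K S C : {set {set V}}) (s p f : {set V}) (v : V) (x y : V -> R) (t : R).

Lemma in_simplexP s x :
  reflect [/\ forall u, 0 <= x u, \sum_u x u = 1 & forall u, u \notin s -> x u = 0]
          (in_simplex s x).
Proof.
apply: (iffP and3P) => [[/forallP x_ge0 /eqP x_sum1 /forallP x_out] | [x_ge0 x_sum1 x_out]].
  by split=> // u us; apply/eqP; rewrite (implyP (x_out u)).
split; [exact/forallP | exact/eqP |].
by apply/forallP=> u; apply/implyP=> us; rewrite x_out.
Qed.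

Lemma in_simplex_convex s x y t :
  0 <= t <= 1 -> in_simplex s x -> in_simplex s y ->
  in_simplex s (fun u => (1 - t) * x u + t * y u).
Proof.
case/andP=> t_ge0 t_le1 /in_simplexP[x_ge0 x_sum1 x_out] /in_simplexP[y_ge0 y_sum1 y_out].
apply/in_simplexP; split.
- by move=> u; rewrite addr_ge0 ?mulr_ge0 ?subr_ge0.
- by rewrite big_split /= -!mulr_sumr x_sum1 y_sum1 !mulr1 subrK.
- by move=> u us; rewrite x_out ?y_out ?mulr0 ?addr0.
Qed.

Lemma in_simplex_fo_retract s f v x :
  f \subset s -> v \in s :\: f -> in_simplex s x -> in_simplex s (fo_retract f v x).
Proof.
move=> fs /setDP[vs vf] /in_simplexP[x_ge0 x_sum1 x_out].
rewrite /fo_retract; set mu := \big[Num.min/1]_(u in f) x u.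
have mu_le u : u \in f -> mu <= x u by move=> uf; rewrite /mu (bigD1 u) //= ge_min lexx.
have mu_ge0 : 0 <= mu.
  by apply: (big_ind (>= 0)) => // a b a_ge0 b_ge0; rewrite le_min a_ge0 b_ge0.
have sum_split (F : V -> R) : \sum_u F u =
    \sum_(u in f) F u + (F v + \sum_(u | (u \notin f) && (u != v)) F u).
  by rewrite (bigID (mem f)) /= [X in _ + X](bigD1 v).
apply/in_simplexP; split.
- move=> u; case: ifP => [uf | _]; first by rewrite subr_ge0 mu_le.
  by case: ifP => _ //; rewrite addr_ge0 ?mulr_ge0.
- rewrite -{}[RHS]x_sum1 !sum_split eqxx (negbTE vf).
  rewrite (eq_bigr (fun u => x u - mu)) => [|u -> //].
  rewrite [X in _ + (_ + X)](eq_bigr x) => [|u /andP[/negbTE -> /negbTE -> //]].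
  by rewrite sumrB sumr_const -mulr_natl; ring.
- move=> u us; have uf : u \notin f by apply: contra us; apply: (subsetP fs).
  have uv : u != v by apply: contraNneq us => ->.
  by rewrite (negbTE uf) (negbTE uv) x_out.
Qed.

Lemma in_simplex_fo_homotopy p f v x t :
  f \subset p -> v \in p :\: f -> 0 <= t <= 1 -> in_simplex p x ->
  in_simplex p (fo_homotopy p f v x t).
Proof.
move=> fp vpf t01 xp; rewrite /fo_homotopy xp.
by apply: in_simplex_convex; last exact: in_simplex_fo_retract fp vpf xp.
Qed.

Definition carrier x : {set V} := [set u | x u != 0].

Lemma carrier_face s x : in_simplex s x -> carrier x \subset s /\ carrier x != set0.
Proof.
case/in_simplexP=> _ x_sum1 x_out; split.
  by apply/subsetP=> u; rewrite inE; apply: contraR => us; rewrite x_out.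
apply/set0Pn/existsP; apply: contraT; rewrite negb_exists => /forallP x_eq0.
have : \sum_u x u = 0 by apply: big1 => u _; move: (x_eq0 u); rewrite inE negbK => /eqP.
by rewrite x_sum1 => /eqP; rewrite oner_eq0.
Qed.

Lemma carrier_in_complex K x : is_complex K -> realization K x -> carrier x \in K.
Proof.
move=> [_ K_faces] [s sK xs]; have [xs_sub x_ne0] := carrier_face xs.
exact: K_faces xs_sub x_ne0.
Qed.

Lemma realization_disjoint C S x :
  is_complex C -> is_complex S -> [disjoint C & S] ->
  realization C x -> ~ realization S x.
Proof.
move=> isC isS CS xC xS.
have := carrier_in_complex isS xS.
by rewrite (disjointFr CS (carrier_in_complex isC xC)).
Qed.

Lemma fo_homotopy_id p f v x t : ~~ in_simplex p x -> fo_homotopy p f v x t = x.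
Proof. by rewrite /fo_homotopy => /negbTE ->. Qed.

End FreelyOrthogonalRetraction.

Theorem lemma5p4 (R : realFieldType) (V : finType)
    (K C S : {set {set V}}) (p f : {set V}) (v : V) :
  layered K C S ->
  elementary_C_collapse K C p f ->
  p :\: f = [set v] ->
  forall t : R, 0 <= t <= 1 ->
    (forall x : V -> R, realization K x -> ~ realization S x ->
       realization K (fo_homotopy p f v x t) /\
       ~ realization S (fo_homotopy p f v x t)) /\
    (forall y : V -> R, realization S y <->
       exists2 x : V -> R, realization S x & fo_homotopy p f v x t = y).
Proof.
case=> _ [isC _] [isS _] CS [pC _ [pK _] [_ _ fp _]] pf_v t t01.
have vpf : v \in p :\: f by rewrite pf_v set11.
have p_off_S (x : V -> R) : in_simplex p x -> ~ realization S x.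
  by move=> xp; apply: (realization_disjoint isC isS CS); exists p.
have H_fixes_S x : realization S x -> fo_homotopy p f v x t = x.
  by move=> xS; apply: fo_homotopy_id; apply/negP => xp; exact: p_off_S xp xS.
split=> [x xK xS | y].
  have [xp | xNp] := boolP (in_simplex p x); last by rewrite fo_homotopy_id.
  have Hxp := in_simplex_fo_homotopy (proper_sub fp) vpf t01 xp.
  by split; [exists p | exact: p_off_S].
split=> [yS | [x xS <-]]; last by rewrite H_fixes_S.
by exists y; rewrite ?H_fixes_S.
Qed.
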